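(* Let $\mathfrak m,\mathfrak n\in\mathrm{Mult}^{\mathrm{ul}}$, and let $\Delta\in\mathfrak p_{\mathfrak m,\mathfrak n}$ and $\Delta'\in\mathfrak q_{\mathfrak m,\mathfrak n}$. Then at least one of the following holds: (i) $s(\Delta)>s(\Delta')$; (ii) $e(\Delta)>e(\Delta')$; (iii) $\mathrm{csupp}(\Delta)\cap\mathrm{csupp}(\Delta')=\emptyset$.
   Context: $F$ non-archimedean local field, $\nu=|\det(\cdot)|_F$. For cuspidal $\rho$ and reals $a,b$ with $b-a\in\mathbb Z_{\ge0}$, $[a,b]_\rho=\{\nu^a\rho,\dots,\nu^b\rho\}$, $[a,a-1]_\rho=\emptyset$, $s([a,b]_\rho)=\nu^a\rho$, $e([a,b]_\rho)=\nu^b\rho$, $\mathrm{csupp}([a,b]_\rho)$ the set $\{\nu^a\rho,\dots,\nu^b\rho\}$; for cuspidals in one line, $\nu^x\rho>\nu^y\rho$ means $x>y$. Linked: $a<a'\le b+1<b'+1$ or $a'<a\le b'+1<b+1$ (different cuspidal lines: unlinked). $\mathrm{Mult}^{\mathrm{ul}}$ (resp. $\mathrm{Mult}^{\mathrm{ul}}_\rho$): finite multisets of nonempty segments (resp. of the form $[x,y]_\rho$), pairwise unlinked. Construction. For $\mathfrak m_\rho,\mathfrak n_\rho\in\mathrm{Mult}^{\mathrm{ul}}_\rho$: $\mathfrak m_1=\mathfrak m_\rho$, $\mathfrak n_1=\mathfrak n_\rho$; at step $i$ let $\nu^{a_i}\rho$ be the minimal $s(\Delta)$, $\Delta\in\mathfrak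 m_i$, and $[a_i,b_i]_\rho$ the longest segment of $\mathfrak m_i$ beginning there; if $\{[a',b']_\rho\in\mathfrak n_i:a_i\le a'\le b_i\le b'\}\neq\emptyset$ let $[a'_i,b'_i]_\rho$ be its longest element, otherwise $[a'_i,b'_i]_\rho=\emptyset$; $\mathfrak m_{i+1}=\mathfrak m_i-[a_i,b_i]_\rho$, $\mathfrak n_{i+1}=\mathfrak n_i-[a'_i,b'_i]_\rho$; stop when $\mathfrak m_{k+1}=\emptyset$. $\mathfrak p_{\mathfrak m_\rho,\mathfrak n_\rho}=\sum_{i=1}^k[a_i,a'_i-1]_\rho$, $\mathfrak q_{\mathfrak m_\rho,\mathfrak n_\rho}=\sum_{i=1}^k[b_i+1,b'_i]_\rho+\mathfrak n_{k+1}$, with $[a_i,a'_i-1]_\rho:=[a_i,b_i]_\rho$ and $[b_i+1,b'_i]_\rho:=\emptyset$ when $[a'_i,b'_i]_\rho=\emptyset$ (empty segments omitted). For $\mathfrak m,\mathfrak n\in\mathrm{Mult}^{\mathrm{ul}}$ write $\mathfrak m=\sum_i\mathfrak m_{\rho_i}$, $\mathfrak n=\sum_i\mathfrak n_{\rho_i}$ with $\mathfrak m_{\rho_i},\mathfrak n_{\rho_i}\in\mathrm{Mult}^{\mathrm{ul}}_{\rho_i}$ (possibly empty), $\rho_i\not\cong\nu^x\rho_j$ for $i\neq j$, and put $\mathfrak p_{\mathfrak m,\mathfrak n}=\sum_i\mathfrak p_{\mathfrak m_{\rho_i},\mathfrak n_{\rho_i}}$, $\mathfrak q_{\mathfrak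 m,\mathfrak n}=\sum_i\mathfrak q_{\mathfrak m_{\rho_i},\mathfrak n_{\rho_i}}$. *)

From HB Require Import structures.
From mathcomp Require Import all_boot all_order all_algebra.
Set Implicit Arguments. Unset Strict Implicit. Unset Printing Implicit Defensive.
Import Order.TTheory GRing.Theory Num.Theory.
Local Open Scope ring_scope.

(* Model: a cuspidal representation is a pair (l, k) where
   l : L labels a cuspidal line {nu^k rho : k in Z} (with a fixed base point
   rho_l) and k : int is the exponent, i.e. (l,k) stands for nu^k rho_l.
   A segment [a,b]_{rho_l} is the triple (l, a, b); nonempty iff a <= b. *)

Definition cusp (L : Type) := (L * int)%type.
Definition seg (L : Type) := (L * int * int)%type.

Definition sline (L : Type) (D : seg L) : L := D.1.1.
Definition sbeg (L : Type) (D : seg L) : int := D.1.2.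
Definition send (L : Type) (D : seg L) : int := D.2.

Definition sbeg_cusp (L : Type) (D : seg L) : cusp L := (sline D, sbeg D).
Definition send_cusp (L : Type) (D : seg L) : cusp L := (sline D, send D).

Definition cusp_gt (L : eqType) (c c' : cusp L) : bool :=
  (c.1 == c'.1) && (c'.2 < c.2).

Definition csupp (L : eqType) (D : seg L) (c : cusp L) : bool :=
  (c.1 == sline D) && (sbeg D <= c.2) && (c.2 <= send D).

Definition csupp_disjoint (L : eqType) (D D' : seg L) : Prop :=
  forall c : cusp L, ~~ (csupp D c && csupp D' c).

Definition nonempty_seg (L : Type) (D : seg L) : bool := sbeg D <= send D.

Definition linked (L : eqType) (D D' : seg L) : bool :=
  (sline D == sline D') &&
  (((sbeg D < sbeg D') && (sbeg D' <= send D + 1) && (send D + 1 < send D' + 1))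
   || ((sbeg D' < sbeg D) && (sbeg D <= send D' + 1) && (send D' + 1 < send D + 1))).

(* Mult^ul : finite multisets (sequences, order irrelevant) of nonempty,
   pairwise unlinked segments *)
Definition mult_ul (L : eqType) (m : seq (seg L)) : bool :=
  all (@nonempty_seg L) m && all (fun D => all (fun D' => ~~ linked D D') m) m.

Fixpoint best (T : Type) (better : T -> T -> bool) (x : T) (s : seq T) : T :=
  match s with
  | [::] => x
  | y :: s' => best better (if better y x then y else x) s'
  end.

Definition better_m (y x : int * int) : bool :=
  (y.1 < x.1) || ((y.1 == x.1) && (x.2 < y.2)).

Definition better_n (y x : int * int) : bool := x.2 - x.1 < y.2 - y.1.

Definition seg_if (a b : int) : seq (int * int) :=
  if a <= b then [:: (a, b)] else [::].

(* returns (p, q) ; fuel = size m suffices *)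
Fixpoint pq_line (fuel : nat) (m n : seq (int * int))
  : seq (int * int) * seq (int * int) :=
  match fuel with
  | O => ([::], n)
  | S f =>
    match m with
    | [::] => ([::], n)
    | D0 :: m0 =>
      let D := best better_m D0 m0 in
      let a := D.1 in let b := D.2 in
      let c := [seq D' <- n | (a <= D'.1) && (D'.1 <= b) && (b <= D'.2)] in
      match c with
      | [::] =>
        let r := pq_line f (rem D m) n in
        ((a, b) :: r.1, r.2)
      | C0 :: c0 =>
        let D' := best better_n C0 c0 in
        let r := pq_line f (rem D m) (rem D' n) in
        (seg_if a (D'.1 - 1) ++ r.1, seg_if (b + 1) D'.2 ++ r.2)
      end
    end
  end.

Definition on_line (L : eqType) (l : L) (m : seq (seg L)) : seq (int * int) :=
  [seq (sbeg D, send D) | D <- m & sline D == l].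

Definition lines_of (L : eqType) (m n : seq (seg L)) : seq L :=
  undup [seq sline D | D <- m ++ n].

Definition tag_line (L : Type) (l : L) (s : seq (int * int)) : seq (seg L) :=
  [seq (l, x.1, x.2) | x <- s].

Definition pq_l (L : eqType) (l : L) (m n : seq (seg L)) :=
  pq_line (size (on_line l m)) (on_line l m) (on_line l n).

Definition p_mn (L : eqType) (m n : seq (seg L)) : seq (seg L) :=
  flatten [seq tag_line l (pq_l l m n).1 | l <- lines_of m n].
Definition q_mn (L : eqType) (m n : seq (seg L)) : seq (seg L) :=
  flatten [seq tag_line l (pq_l l m n).2 | l <- lines_of m n].

(* On one cuspidal line, every segment of p is a prefix of a segment of m, and
   every segment of q is a right part of a segment of n starting no earlier than
   some segment of m. By induction along the construction, no Q in q covers the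
   end of a P in p (P.1 <= Q.1 <= P.2 <= Q.2): for the segments produced at the
   current step this would give a candidate the step overlooked, a candidate
   longer than the chosen one, or a segment of m linked with the chosen one.
   Without covering, s(P) <= s(Q) and e(P) <= e(Q) force P to lie strictly to
   the left of Q. *)

From mathcomp Require Import all_boot all_order all_algebra.
From mathcomp Require Import zify.
Set Implicit Arguments. Unset Strict Implicit. Unset Printing Implicit Defensive.
Import Order.TTheory GRing.Theory Num.Theory.
Local Open Scope ring_scope.

Section Best.

Variables (T : eqType) (better : rel T).
Hypotheses (better_trans : transitive better) (better_irr : irreflexive better).

Lemma best_mem x s : best better x s \in x :: s.
Proof.
elim: s x => [|z s IHs] x /=; first exact: mem_head.
set x' := if better z x then z else x.
have x'_in : x' \in [:: x, z & s] by rewrite /x' !inE; case: ifP; rewrite eqxx ?orbT.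
by move: (IHs x'); rewrite inE => /orP[/eqP->|bs] //; rewrite !inE bs !orbT.
Qed.

Lemma best_beaten x s y : better y (best better x s) -> better y x.
Proof.
elim: s x => [|z s IHs] x //= /IHs.
by case: ifP => // zx yz; exact: better_trans zx.
Qed.

Lemma best_maximal x s y : y \in x :: s -> ~~ better y (best better x s).
Proof.
case/predU1P => [-> | ]; first by apply/negP => /best_beaten; rewrite better_irr.
elim: s x => [|z s IHs] x //; case/predU1P => [-> | ys] /=.
  by apply/negP => /best_beaten; case: ifP => [_|->]; rewrite ?better_irr.
exact: IHs.
Qed.

End Best.

Lemma better_m_trans : transitive better_m.
Proof. move=> y x z; rewrite /better_m; lia. Qed.

Lemma better_m_irr : irreflexive better_m.
Proof. by move=> x; rewrite /better_m !ltxx andbF. Qed.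

Lemma better_n_trans : transitive better_n.
Proof. move=> y x z; rewrite /better_n; lia. Qed.

Lemma better_n_irr : irreflexive better_n.
Proof. by move=> x; rewrite /better_n ltxx. Qed.

Local Notation iseg := (int * int)%type.

(* For D = [a,b], the candidates {[a',b'] : a <= a' <= b <= b'} of the
   construction are the E with [covers_end D E]. *)
Definition covers_end (D E : iseg) : bool :=
  (D.1 <= E.1) && (E.1 <= D.2) && (D.2 <= E.2).

Definition linked_line (x y : iseg) : bool :=
  ((x.1 < y.1) && (y.1 <= x.2 + 1) && (x.2 + 1 < y.2 + 1)) ||
  ((y.1 < x.1) && (x.1 <= y.2 + 1) && (y.2 + 1 < x.2 + 1)).

Definition unlinked_line (s : seq iseg) : Prop :=
  {in s &, forall x y, ~~ linked_line x y}.

Lemma unlinked_line_rem s z : unlinked_line s -> unlinked_line (rem z s).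
Proof. by move=> ul x y /mem_rem xs /mem_rem ys; apply: ul. Qed.

(* Induction along the construction, seeing the choices made by [best] only
   through their extremal properties; the first case covers both exhausted fuel
   and exhausted [m]. *)
Lemma pq_line_ind (R : seq iseg -> seq iseg -> seq iseg * seq iseg -> Prop) :
  (forall m n, R m n ([::], n)) ->
  (forall f m n D, D \in m -> {in m, forall M, ~~ better_m M D} ->
     {in n, forall N, ~~ covers_end D N} ->
     let r := pq_line f (rem D m) n in
     R (rem D m) n r -> R m n (D :: r.1, r.2)) ->
  (forall f m n D D', D \in m -> {in m, forall M, ~~ better_m M D} ->
     D' \in n -> covers_end D D' ->
     {in n, forall N, covers_end D N -> ~~ better_n N D'} ->
     let r := pq_line f (rem D m) (rem D' n) in
     R (rem D m) (rem D' n) r ->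
     R m n (seg_if D.1 (D'.1 - 1) ++ r.1, seg_if (D.2 + 1) D'.2 ++ r.2)) ->
  forall f m n, R m n (pq_line f m n).
Proof.
move=> base step_none step_some.
elim=> [|f IHf] [|D0 m0] n //=.
set D := best better_m D0 m0.
have D_in : D \in D0 :: m0 by exact: best_mem.
have D_min := best_maximal better_m_trans better_m_irr (x := D0) (s := m0).
case Ec: filter => [|C0 c0].
  rewrite -surjective_pairing.
  apply: step_none => // N Nn; apply/negP => cov.
  by move: (mem_filter (covers_end D) N n); rewrite Ec cov Nn.
set D' := best better_n C0 c0.
have D'_cand : D' \in filter (covers_end D) n by rewrite [filter _ n]Ec best_mem.
move: D'_cand; rewrite mem_filter => /andP[cov D'n].
apply: step_some => // N Nn covN; apply: (best_maximal better_n_trans better_n_irr).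
by rewrite -Ec mem_filter Nn andbT.
Qed.

Lemma better_m_start M D : ~~ better_m M D -> D.1 <= M.1.
Proof. rewrite /better_m; lia. Qed.

Lemma mem_pq_line_p f m n P : P \in (pq_line f m n).1 ->
  exists2 M, M \in m & M.1 = P.1 /\ P.2 <= M.2.
Proof.
move: P; apply: (pq_line_ind (R := fun m n r => forall P, P \in r.1 ->
  exists2 M, M \in m & M.1 = P.1 /\ P.2 <= M.2)) => {f m n} // f m n D.
- move=> D_in _ _ r IH P; rewrite in_cons => /predU1P[->|/IH[M /mem_rem]].
  + by exists D.
  + by exists M.
- move=> D' D_in _ _ cov _ r IH P; rewrite /seg_if.
  case: ifP => _ /=; last by case/IH => M /mem_rem; exists M.
  rewrite in_cons => /predU1P[->|/IH[M /mem_rem]]; last by exists M.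
  by exists D => //; move: cov; rewrite /covers_end /=; lia.
Qed.

Lemma pq_line_q_covers_end f m n P Q : {in m, forall M, P.1 <= M.1} ->
  Q \in (pq_line f m n).2 -> covers_end P Q -> exists2 N, N \in n & covers_end P N.
Proof.
move: P Q; apply: (pq_line_ind (R := fun m n r => forall P Q,
  {in m, forall M, P.1 <= M.1} -> Q \in r.2 -> covers_end P Q ->
  exists2 N, N \in n & covers_end P N)) => {f m n} [m n P Q _ Qn|f m n D|f m n D D'].
- by exists Q.
- move=> _ _ _ r IH P Q Pm Qr covQ.
  by apply: IH Qr covQ => M /mem_rem /Pm.
- move=> D_in _ D'n cov _ r IH P Q Pm; rewrite /seg_if /=.
  have PmD : {in rem D m, forall M, P.1 <= M.1} by move=> M /mem_rem /Pm.
  case: ifP => _ /=; last by move=> Qr /(IH _ _ PmD Qr)[N /mem_rem]; exists N.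
  rewrite in_cons => /predU1P[->|Qr /(IH _ _ PmD Qr)[N /mem_rem]]; last by exists N.
  move=> covQ; exists D' => //; move: (Pm D D_in) cov covQ; rewrite /covers_end /=; lia.
Qed.

Lemma unlinked_end_le D M : ~~ linked_line D M -> ~~ better_m M D ->
  M.1 <= D.2 + 1 -> M.2 <= D.2.
Proof. rewrite /linked_line /better_m; lia. Qed.

Lemma longest_covers_end D D' N : ~~ linked_line N D' ->
  (covers_end D N -> ~~ better_n N D') -> covers_end D D' ->
  ~~ covers_end (D.1, D'.1 - 1) N.
Proof.
rewrite /linked_line /covers_end /better_n /= => unl longest cov.
apply/negP => covN; case: (leP D.2 N.2) => [endN|]; last by move: unl cov covN; lia.
have /longest : covers_end D N by rewrite /covers_end; move: cov covN endN; lia.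
by move: unl cov covN endN; lia.
Qed.

Lemma pq_line_not_covers_end f m n P Q : unlinked_line m -> unlinked_line n ->
  P \in (pq_line f m n).1 -> Q \in (pq_line f m n).2 -> ~~ covers_end P Q.
Proof.
move: P Q; apply: (pq_line_ind (R := fun m n r => forall P Q,
  unlinked_line m -> unlinked_line n -> P \in r.1 -> Q \in r.2 ->
  ~~ covers_end P Q)) => {f m n} // f m n D.
- move=> D_in D_min no_cov r IH P Q ulm uln /=.
  have D_start : {in rem D m, forall M, D.1 <= M.1}.
    by move=> M /mem_rem /D_min /better_m_start.
  rewrite in_cons => /predU1P[->{P} Qr | Pr Qr]; last first.
    exact: IH P Q (unlinked_line_rem ulm) uln Pr Qr.
  apply/negP => covQ; have [N Nn] := pq_line_q_covers_end D_start Qr covQ.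
  by rewrite (negPf (no_cov N Nn)).
- move=> D' D_in D_min D'n cov D'_max r IH P Q ulm uln /=.
  have D_start : {in rem D m, forall M, D.1 <= M.1}.
    by move=> M /mem_rem /D_min /better_m_start.
  rewrite !mem_cat /seg_if => /orP[Pseg|Pr] /orP[Qseg|Qr].
  + move: Pseg Qseg; do 2 case: ifP => // _.
    by rewrite !inE => /eqP-> /eqP->; move: cov; rewrite /covers_end /=; lia.
  + move: Pseg; case: ifP => // _; rewrite inE => /eqP->.
    apply/negP => covQ.
    have [N /mem_rem Nn covN] := pq_line_q_covers_end (P := (D.1, D'.1 - 1)) D_start Qr covQ.
    by rewrite (negPf (longest_covers_end (uln _ _ Nn D'n) (D'_max N Nn) cov)) in covN.
  + move: Qseg; case: ifP => // _; rewrite inE => /eqP->.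
    have [M /mem_rem Mm [MP PM]] := mem_pq_line_p Pr.
    apply/negP; rewrite /covers_end /= -MP => /andP[/andP[startM endD] _].
    have M_end := unlinked_end_le (ulm _ _ D_in Mm) (D_min M Mm) startM.
    by have := le_trans endD (le_trans PM M_end); lia.
  + exact: IH P Q (unlinked_line_rem ulm) (unlinked_line_rem uln) Pr Qr.
Qed.

Lemma unlinked_on_line (L : eqType) (l : L) (m : seq (seg L)) :
  mult_ul m -> unlinked_line (on_line l m).
Proof.
case/andP=> _ /allP unl _ _ /mapP[X + ->] /mapP[Y + ->].
rewrite !mem_filter => /andP[/eqP lX Xm] /andP[/eqP lY Ym].
by move: (allP (unl X Xm) Y Ym); rewrite /linked lX lY eqxx.
Qed.

Lemma mem_tag_lines (L : eqType) (ls : seq L) (F : L -> seq iseg) (D : seg L) :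
  D \in flatten [seq tag_line l (F l) | l <- ls] ->
  exists l, exists2 x, x \in F l & D = (l, x.1, x.2).
Proof. by case/flatten_mapP => l _ /mapP[x x_in ->]; exists l, x. Qed.

Lemma csupp_disjoint_lines (L : eqType) (D D' : seg L) :
  sline D != sline D' -> csupp_disjoint D D'.
Proof.
move=> ll' c; rewrite /csupp; apply/negP.
by case/andP => /andP[/andP[/eqP-> _] _] /andP[/andP[eqD _] _]; rewrite eqD in ll'.
Qed.

Lemma csupp_disjoint_line (L : eqType) (l : L) (x y : iseg) :
  ~~ covers_end x y -> x.1 <= y.1 -> x.2 <= y.2 ->
  csupp_disjoint (l, x.1, x.2) (l, y.1, y.2).
Proof.
move=> not_cov; rewrite /csupp_disjoint /csupp /sbeg /send /= => le1 le2 c.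
by apply/negP; move: not_cov; rewrite /covers_end; lia.
Qed.

Theorem lemma5p2 (L : eqType) (m n : seq (seg L)) (D D' : seg L) :
  mult_ul m -> mult_ul n ->
  D \in p_mn m n -> D' \in q_mn m n ->
  [\/ cusp_gt (sbeg_cusp D) (sbeg_cusp D'),
      cusp_gt (send_cusp D) (send_cusp D')
    | csupp_disjoint D D'].
Proof.
move=> ulm uln /mem_tag_lines[l [x x_p ->]] /mem_tag_lines[l' [y y_q ->]].
case: (eqVneq l l') y_q => [<- y_q|ll' _]; last by apply/Or33/csupp_disjoint_lines.
have not_cov := pq_line_not_covers_end
  (unlinked_on_line (l := l) ulm) (unlinked_on_line (l := l) uln) x_p y_q.
rewrite /cusp_gt /sbeg_cusp /send_cusp /sbeg /send /= eqxx /=.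
case: (ltP y.1 x.1) => [_|le1]; first exact: Or31.
case: (ltP y.2 x.2) => [_|le2]; first exact: Or32.
by apply: Or33; apply: csupp_disjoint_line.
Qed.
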